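(* Let $R$ be a commutative domain with field of fractions $F$, let $A=(a_{i,j})\in R^{n\times m}$ have rank $r$, and let $k$ be an integer with $0\le k<r$ such that $\alpha^i\neq 0$ for $i=k,k+1,\dots,r$. Let $s,p$ be integers with $k<s\le n$ and $k<p\le m$. Define $L^k_s=(\alpha^j_{i,j})$ with $i=k+1,\dots,s$, $j=k+1,\dots,r$ (an $(s-k)\times(r-k)$ lower triangular matrix), $U^k_p=(\alpha^i_{i,j})$ with $i=k+1,\dots,r$, $j=k+1,\dots,p$ (an $(r-k)\times(p-k)$ upper triangular matrix), and the $(r-k)\times(r-k)$ diagonal matrix $D^k_{s,p}=\mathrm{diag}\big(\alpha^k(\alpha^{i-1}\alpha^{i})^{-1}\big)_{i=k+1,\dots,r}$ over $F$. Then $$\mathcal A^k_{s,p}=L^k_s\,D^k_{s,p}\,U^k_p,$$ i.e. for all $k<i\le s$, $k<j\le p$: $\alpha^{k+1}_{i,j}=\sum_{l=k+1}^{r}\alpha^l_{i,l}\,\alpha^k(\alpha^{l-1}\alpha^l)^{-1}\,\alpha^l_{l,j}$.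
   Context: For a matrix $A=(a_{i,j})\in R^{n\times m}$ and integers $k\ge1$, $1\le i\le n$, $1\le j\le m$, $\alpha^k_{i,j}$ denotes the $k\times k$ minor of $A$ formed by rows $1,2,\dots,k-1,i$ and columns $1,2,\dots,k-1,j$ (so it is $0$ if $i<k$ or $j<k$, because of a repeated row or column). Set $\alpha^0=1$ and $\alpha^k=\alpha^k_{k,k}$ (the $k$-th leading principal minor). For $0\le k<s\le n$ and $k<p\le m$, $\mathcal A^k_{s,p}$ denotes the $(s-k)\times(p-k)$ matrix $(\alpha^{k+1}_{i,j})_{i=k+1,\dots,s;\ j=k+1,\dots,p}$; in particular $\mathcal A^0_{n,m}=A$. *)

From HB Require Import structures.
From mathcomp Require Import all_boot all_order all_algebra.
Set Implicit Arguments. Unset Strict Implicit. Unset Printing Implicit Defensive.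
Import Order.TTheory GRing.Theory Num.Theory.
Local Open Scope ring_scope.

Section Minors.
Variables (R : idomainType) (n m : nat) (A : 'M[R]_(n, m)).

(* entry with 0-indexed nat indices, 0 outside the matrix (never used there) *)
Definition entry (i j : nat) : R :=
  match insub i, insub j with
  | Some i', Some j' => A i' j'
  | _, _ => 0
  end.

(* alpha^k_{i,j} with 1-indexed i, j: the k x k minor on rows 1..k-1,i and
   columns 1..k-1,j.  For k = 0 this is the empty determinant, i.e. 1. *)
Definition alpha (k i j : nat) : R :=
  \det (\matrix_(a < k, b < k)
          entry (if (a < k.-1)%N then nat_of_ord a else i.-1)
                (if (b < k.-1)%N then nat_of_ord b else j.-1)).

Definition lpm (k : nat) : R := alpha k k k.

Local Notation F := {fraction R}.
Local Notation "x %:F" := (@tofrac R x).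

Definition calA (k s p : nat) : 'M[F]_(s - k, p - k) :=
  \matrix_(a < s - k, b < p - k) (alpha k.+1 (k.+1 + a) (k.+1 + b))%:F.

Definition Lmx (k s r : nat) : 'M[F]_(s - k, r - k) :=
  \matrix_(a < s - k, b < r - k) (alpha (k.+1 + b) (k.+1 + a) (k.+1 + b))%:F.

Definition Umx (k p r : nat) : 'M[F]_(r - k, p - k) :=
  \matrix_(a < r - k, b < p - k) (alpha (k.+1 + a) (k.+1 + a) (k.+1 + b))%:F.

Definition Dmx (k r : nat) : 'M[F]_(r - k) :=
  diag_mx (\row_(a < r - k)
             ((lpm k)%:F / ((lpm (k + a))%:F * (lpm (k.+1 + a))%:F))).

End Minors.

From HB Require Import structures.
From mathcomp Require Import all_boot all_order all_algebra.
From mathcomp Require Import ring zify.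
Set Implicit Arguments. Unset Strict Implicit. Unset Printing Implicit Defensive.
Import Order.TTheory GRing.Theory Num.Theory.
Local Open Scope ring_scope.

(* Over the fraction field, alpha^(u+1)_(i,j) = alpha^u * S_u(i,j), where S_u is
   the Schur complement of the leading u x u block of A.  Applying this to the
   bordered 2 x 2 minors (Sylvester's identity) gives the rank-one update
   S_(u+1) = S_u - S_u(., u) S_u(u, .) / S_u(u, u), which telescopes from u = k
   to u = r; there the Schur complement vanishes, since every (r+1)-minor of a
   matrix of rank r does.  Each rank-one term, rewritten through minors, is one
   summand of (L D U)_(i,j). *)

Lemma det_block_schur (K : comUnitRingType) u q (P : 'M[K]_u) U V (W : 'M_q) :
  P \in unitmx -> \det (block_mx P U V W) = \det P * \det (W - V *m invmx P *m U).
Proof.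
move=> Pu.
have -> : block_mx P U V W =
    block_mx 1%:M 0 (V *m invmx P) 1%:M *m block_mx P U 0 (W - V *m invmx P *m U).
  rewrite mulmx_block !mul1mx !mul0mx ?mulmx0 ?addr0 ?add0r -mulmxA mulVmx // mulmx1.
  by rewrite addrC subrK.
by rewrite det_mulmx det_lblock det_ublock !det1 !mul1r.
Qed.

Lemma det_mx22 (K : comNzRingType) (M : 'M[K]_2) :
  \det M = M 0 0 * M 1 1 - M 0 1 * M 1 0.
Proof.
rewrite (expand_det_row _ 0) !big_ord_recl big_ord0 addr0 /cofactor !det_mx11 !mxE /=.
rewrite expr0 expr1 mul1r mulN1r mulrN.
by congr (M _ _ * M _ _ - M _ _ * M _ _); apply/val_inj.
Qed.

Lemma mxrank_mxsub (K : fieldType) m n p q (f : 'I_p -> 'I_m) (g : 'I_q -> 'I_n)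
    (M : 'M[K]_(m, n)) :
  (\rank (mxsub f g M) <= \rank M)%N.
Proof.
rewrite mxsubrc; apply: leq_trans (mxrankS (rowsub_sub _ _)) _.
rewrite -mxrank_tr (trmx_mxsub id g) -(mxrank_tr M).
exact/mxrankS/rowsub_sub.
Qed.

Lemma det_mxsub_eq0 (K : fieldType) m n q (f : 'I_q -> 'I_m) (g : 'I_q -> 'I_n)
    (M : 'M[K]_(m, n)) :
  (\rank M < q)%N -> \det (mxsub f g M) = 0.
Proof.
move=> rkM; apply/eqP; apply: contraLR rkM => detN0.
rewrite -leqNgt -{1}(mxrank_unit (A := mxsub f g M)) ?mxrank_mxsub //.
by rewrite unitmxE unitfE.
Qed.

Section SchurComplement.
Variables (R : idomainType) (n m : nat) (A : 'M[R]_(n, m)).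
Local Notation F := {fraction R}.
Local Notation "x %:F" := (@tofrac R x).

Definition entryF (x y : nat) : F := (entry A x y)%:F.

Lemma entry_ord (i : 'I_n) (j : 'I_m) : entry A i j = A i j.
Proof. by rewrite /entry !valK. Qed.

Definition leading_mx u : 'M[F]_u := \matrix_(c < u, d < u) entryF c d.

(* Entry (x, y) of the Schur complement of [leading_mx u]; unlike [alpha], the
   indices x, y are 0-based. *)
Definition schur u x y : F :=
  entryF x y -
  \sum_(c < u) (\sum_(d < u) entryF x d * invmx (leading_mx u) d c) * entryF c y.

Lemma tofrac_alpha k i j :
  (alpha A k i j)%:F = \det (\matrix_(a < k, b < k)
     entryF (if (a < k.-1)%N then nat_of_ord a else i.-1)
            (if (b < k.-1)%N then nat_of_ord b else j.-1)).
Proof. by rewrite -det_map_mx; congr (\det _); apply/matrixP=> a b; rewrite !mxE. Qed.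

Lemma tofrac_lpm u : (lpm A u)%:F = \det (leading_mx u).
Proof.
rewrite /lpm tofrac_alpha; congr (\det _); apply/matrixP=> a b; rewrite !mxE.
have ordE (c : 'I_u) : (if (c < u.-1)%N then nat_of_ord c else u.-1) = c.
  by case: ifP => // /negbT; have := ltn_ord c; lia.
by rewrite !ordE.
Qed.

Lemma det_bordered N u q (rho gam : nat -> nat) :
  N = (u + q)%N ->
  (forall c, (c < u)%N -> rho c = c) -> (forall d, (d < u)%N -> gam d = d) ->
  lpm A u != 0 ->
  \det (\matrix_(a < N, b < N) entryF (rho a) (gam b)) =
  (lpm A u)%:F * \det (\matrix_(x < q, y < q) schur u (rho (u + x)%N) (gam (u + y)%N)).
Proof.
move=> -> rho_id gam_id lpmN0; set M := \matrix_(a, b) _.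
have leadE : ulsubmx M = leading_mx u.
  by apply/matrixP=> c d; rewrite !mxE /= rho_id ?gam_id.
have lead_unit : leading_mx u \in unitmx.
  by rewrite unitmxE unitfE -tofrac_lpm tofrac_eq0.
rewrite -[M]submxK det_block_schur leadE // tofrac_lpm; congr (_ * \det _).
apply/matrixP=> x y; rewrite !mxE /schur; congr (_ - _).
apply: eq_bigr => c _; rewrite !mxE /= rho_id //; congr (_ * _).
by apply: eq_bigr => d _; rewrite !mxE /= gam_id.
Qed.

Lemma alpha_succE u i j :
  lpm A u != 0 -> (alpha A u.+1 i j)%:F = (lpm A u)%:F * schur u i.-1 j.-1.
Proof.
move=> lpmN0; rewrite tofrac_alpha /=.
rewrite (@det_bordered _ u 1 (fun a => if (a < u)%N then a else i.-1)
                              (fun b => if (b < u)%N then b else j.-1)) ?addn1 //;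
  last 2 first.
- by move=> c ->.
- by move=> d ->.
by rewrite det_mx11 mxE /= addn0 ltnn.
Qed.

Lemma alpha_succ2E u i j :
  lpm A u != 0 ->
  (alpha A u.+2 i j)%:F = (lpm A u)%:F *
    (schur u u u * schur u i.-1 j.-1 - schur u u j.-1 * schur u i.-1 u).
Proof.
move=> lpmN0; rewrite tofrac_alpha /=.
rewrite (@det_bordered _ u 2 (fun a => if (a < u.+1)%N then a else i.-1)
                              (fun b => if (b < u.+1)%N then b else j.-1)) ?addn2 //;
  last 2 first.
- by move=> c cu; rewrite ltnS ltnW.
- by move=> d du; rewrite ltnS ltnW.
by rewrite det_mx22 !mxE /= addn0 addn1 ltnSn ltnn.
Qed.

Lemma schur_pivot_neq0 u : lpm A u != 0 -> lpm A u.+1 != 0 -> schur u u u != 0.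
Proof.
move=> lpmN0; apply: contraNN => /eqP pivot0.
by rewrite -tofrac_eq0 alpha_succE // pivot0 mulr0.
Qed.

Lemma schur_succ u x y :
  lpm A u != 0 -> lpm A u.+1 != 0 ->
  schur u.+1 x y = schur u x y - schur u x u * schur u u y / schur u u u.
Proof.
move=> lpmN0 lpm1N0; have pivotN0 := schur_pivot_neq0 lpmN0 lpm1N0.
have := alpha_succE x.+1 y.+1 lpm1N0.
rewrite alpha_succ2E // [(lpm A u.+1)%:F]alpha_succE //= -mulrA.
have lpmFN0 : (lpm A u)%:F != 0 by rewrite tofrac_eq0.
move/(mulfI lpmFN0)=> eq_schur.
apply: (mulfI pivotN0); rewrite -eq_schur [RHS]mulrBr [X in _ = _ - X]mulrCA.
by rewrite mulfV // mulr1 [schur u u y * _]mulrC.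
Qed.

Lemma alpha_succ_rank_eq0 r i j :
  \rank (map_mx (@tofrac R) A) = r -> (0 < i <= n)%N -> (0 < j <= m)%N ->
  alpha A r.+1 i j = 0.
Proof.
move=> rkA /andP[i_gt0 i_le] /andP[j_gt0 j_le].
have r_le_n : (r <= n)%N by rewrite -rkA rank_leq_row.
have r_le_m : (r <= m)%N by rewrite -rkA rank_leq_col.
have row_lt (a : 'I_r.+1) : ((if (a < r)%N then nat_of_ord a else i.-1) < n)%N.
  by case: ifP => [a_lt|_]; [exact: leq_trans a_lt r_le_n | lia].
have col_lt (b : 'I_r.+1) : ((if (b < r)%N then nat_of_ord b else j.-1) < m)%N.
  by case: ifP => [b_lt|_]; [exact: leq_trans b_lt r_le_m | lia].
apply/eqP; rewrite -tofrac_eq0 tofrac_alpha /=.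
have -> : \matrix_(a < r.+1, b < r.+1) entryF (if (a < r)%N then nat_of_ord a else i.-1)
                                           (if (b < r)%N then nat_of_ord b else j.-1) =
          mxsub (fun a => Ordinal (row_lt a)) (fun b => Ordinal (col_lt b))
                (map_mx (@tofrac R) A).
  by apply/matrixP=> a b; rewrite !mxE -entry_ord.
by apply/eqP/det_mxsub_eq0; rewrite rkA.
Qed.

Lemma schur_rank_eq0 r x y :
  \rank (map_mx (@tofrac R) A) = r -> lpm A r != 0 -> (x < n)%N -> (y < m)%N ->
  schur r x y = 0.
Proof.
move=> rkA lpmN0 x_lt y_lt.
have := alpha_succE x.+1 y.+1 lpmN0; rewrite alpha_succ_rank_eq0 // /=.
by move/esym/eqP; rewrite mulf_eq0 tofrac_eq0 (negbTE lpmN0) => /eqP.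
Qed.

Lemma schur_telescope k d x y :
  (forall l, (k <= l <= k + d)%N -> lpm A l != 0) ->
  schur k x y =
  \sum_(c < d) schur (k + c) x (k + c) * schur (k + c) (k + c) y
                 / schur (k + c) (k + c) (k + c)
  + schur (k + d) x y.
Proof.
elim: d => [|d IHd] lpmN0; first by rewrite big_ord0 add0r addn0.
rewrite IHd => [|l /andP[k_le l_le]]; last by apply: lpmN0; lia.
rewrite big_ord_recr /= addnS schur_succ; last 2 first.
- by apply: lpmN0; lia.
- by apply: lpmN0; lia.
by rewrite -addrA; congr (_ + _); rewrite addrC subrK.
Qed.

Lemma alpha_expansion r k i j :
  \rank (map_mx (@tofrac R) A) = r -> (k <= r)%N ->
  (forall l, (k <= l <= r)%N -> lpm A l != 0) ->
  (0 < i <= n)%N -> (0 < j <= m)%N ->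
  (alpha A k.+1 i j)%:F =
  \sum_(c < (r - k)%N) (alpha A (k + c).+1 i (k + c).+1)%:F
                   * ((lpm A k)%:F / ((lpm A (k + c))%:F * (lpm A (k + c).+1)%:F))
                   * (alpha A (k + c).+1 (k + c).+1 j)%:F.
Proof.
move=> rkA k_le_r lpmN0 /andP[i_gt0 i_le] /andP[j_gt0 j_le].
rewrite alpha_succE ?lpmN0 ?leqnn //.
rewrite (@schur_telescope k (r - k)) ?subnKC //.
rewrite schur_rank_eq0 ?lpmN0 ?leqnn //; try lia.
rewrite addr0 big_distrr /=; apply: eq_bigr => c _.
have lpm_cN0 : lpm A (k + c) != 0 by apply: lpmN0; have := ltn_ord c; lia.
have lpm_c1N0 : lpm A (k + c).+1 != 0 by apply: lpmN0; have := ltn_ord c; lia.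
have pivotN0 := schur_pivot_neq0 lpm_cN0 lpm_c1N0.
have lpm_cFN0 : (lpm A (k + c))%:F != 0 by rewrite tofrac_eq0.
have lpm_succ : (lpm A (k + c).+1)%:F = (lpm A (k + c))%:F * schur (k + c) (k + c) (k + c).
  exact: alpha_succE.
rewrite lpm_succ !(@alpha_succE (k + c)) //=.
(* [field] is far slower over [{fraction R}] than over an abstract field. *)
have cancel_lpm (K : fieldType) (a g b u v : K) : a != 0 -> g != 0 ->
    b * (u * v / g) = a * u * (b / (a * (a * g))) * (a * v).
  by move=> aN0 gN0; field; rewrite aN0 gN0.
exact: cancel_lpm.
Qed.

End SchurComplement.

Theorem theorem2 (R : idomainType) (n m : nat) (A : 'M[R]_(n, m))
    (r k s p : nat) :
  \rank (map_mx (@tofrac R) A) = r ->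
  (k < r)%N ->
  (forall i, (k <= i <= r)%N -> lpm A i != 0) ->
  (k < s <= n)%N -> (k < p <= m)%N ->
  calA A k s p = Lmx A k s r *m Dmx A k r *m Umx A k p r.
Proof.
move=> rkA k_lt_r lpmN0 /andP[k_lt_s s_le_n] /andP[k_lt_p p_le_m].
apply/matrixP=> a b; rewrite mul_mx_diag !mxE.
rewrite (alpha_expansion rkA (ltnW k_lt_r) lpmN0); last 2 first.
- by have := ltn_ord a; lia.
- by have := ltn_ord b; lia.
by apply: eq_bigr => c _; rewrite !mxE !addSn.
Qed.
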